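(* Let $K$ be a field of characteristic $0$, $S=K[x_1,\dots,x_n]$, and let $I,J\subset S$ be Borel-fixed ideals, where $I$ has minimal monomial generators $f_1,\dots,f_m$ all of the same degree. Fix $t$ and write $$\operatorname{in}_>(Z_t(I,S/J))=\bigoplus_{{\bf u}\subset[m],\ \#{\bf u}=t} e_{\bf u}\otimes L_{\bf u}/J$$ with $L_{\bf u}\supseteq J$ monomial ideals. Then each $L_{\bf u}$ is Borel-fixed.
   Context: A monomial ideal is Borel-fixed if it is invariant under all invertible upper triangular linear changes of coordinates, equivalently (characteristic $0$): for every monomial $fx_j$ in the ideal and every $i<j$, $fx_i$ is in the ideal. Let $F=\bigoplus_{i=1}^m S(-\deg f_i)$ with basis $e_1,\dots,e_m$, $\phi(e_i)=f_i$; $K(I,S/J)=\bigwedge^\bullet F\otimes_S S/J$ is the Koszul complex (differential induced by $\phi$), and $Z_t(I,S/J)$ its module of cycles in position $t$. For ${\bf u}=\{u_1<\dots<u_t\}\subset[m]$, $e_{\bf u}=e_{u_1}\wedge\cdots\wedge e_{u_t}$. Term order: $>_{\rm rev}$ is the degree reverse lexicographic order with $x_1>\cdots>x_n$. For $i_1<\cdots<i_t$, $j_1<\cdots<j_t$, set $e_{i_1}\wedge\cdots\wedge e_{i_t}\succ e_{j_1}\wedge\cdots\wedge e_{j_t}$ if (i) $f_{i_1}\cdots f_{i_t}<_{\rm rev}f_{j_1}\cdots f_{j_t}$, or (ii) $f_{i_1}\cdots f_{i_t}=f_{j_1}\cdots f_{j_t}$ and $x_{i_1}\cdots x_{i_t}>_{\rm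 rev}x_{j_1}\cdots x_{j_t}$ (the index sets compared as monomials in formal variables $x_1>x_2>\cdots$ by degree reverse lex). On terms $e_{\bf u}v$ ($v$ a monomial) set $e_{\bf u}v>e_{{\bf u}'}v'$ if $e_{\bf u}\succ e_{{\bf u}'}$, or $e_{\bf u}=e_{{\bf u}'}$ and $v>_{\rm rev}v'$. Every element of $K_t(I,S/J)$ is uniquely a $K$-linear combination of terms $e_{\bf u}\otimes(v+J)$ with $v$ a monomial not in $J$; its initial term $\operatorname{in}_>(g)$ is the largest such term occurring, and $\operatorname{in}_>(N)$ for a submodule $N$ is the $S$-submodule generated by all $\operatorname{in}_>(g)$, $g\in N$; for $N=Z_t(I,S/J)$ it decomposes as displayed, where $L_{\bf u}$ is the ideal generated by $J$ and the monomials $v$ with $e_{\bf u}\otimes(v+J)\in \operatorname{in}_>(N)$. *)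

From HB Require Import structures.
From mathcomp Require Import all_boot all_order all_algebra.
From mathcomp Require Import mpoly.
Set Implicit Arguments. Unset Strict Implicit. Unset Printing Implicit Defensive.
Import GRing.Theory.
Local Open Scope ring_scope.

(* x_{i+1} corresponds to the ordinal i : 'I_n, so x_1 > ... > x_n means
   ordinal 0 is the largest variable. *)

(* A monomial ideal is represented by its set of monomials: an upward closed
   (under divisibility) set of exponent vectors. *)
Definition monomial_ideal n (P : 'X_{1..n} -> Prop) : Prop :=
  forall a b : 'X_{1..n}, P a -> P (mnm_add a b).

(* Borel-fixed (char 0 characterization, as in the paper): for every monomial
   f*x_j in the ideal and every i < j, f*x_i is in the ideal. *)
Definition borel_fixed n (P : 'X_{1..n} -> Prop) : Prop :=
  monomial_ideal P /\
  forall (a : 'X_{1..n}) (i j : 'I_n), (i < j)%N ->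
    P (mnm_add a (mnm1 j)) -> P (mnm_add a (mnm1 i)).

Definition revgt k (a b : 'X_{1..k}) : bool :=
  (mdeg b < mdeg a)%N ||
  ((mdeg a == mdeg b) &&
   [exists i : 'I_k, (a i < b i)%N && [forall j : 'I_k, (i < j)%N ==> (a j == b j)]]).

Section Koszul.
Variables (K : fieldType) (n m : nat) (f : 'I_m -> 'X_{1..n})
          (J : pred 'X_{1..n}) (t : nat).

Definition fprod (u : {set 'I_m}) : 'X_{1..n} :=
  \big[@mnm_add n/@mnm0 n]_(i in u) f i.

(* the index set u as a squarefree monomial in formal variables x_1 > x_2 > ... *)
Definition xset (u : {set 'I_m}) : 'X_{1..m} := [multinom (i \in u : nat) | i < m].

Definition egt (u u' : {set 'I_m}) : bool :=
  revgt (fprod u') (fprod u) ||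
  ((fprod u == fprod u') && revgt (xset u) (xset u')).

Definition termgt (u : {set 'I_m}) (v : 'X_{1..n}) (u' : {set 'I_m}) (v' : 'X_{1..n}) : bool :=
  egt u u' || ((u == u') && revgt v v').

(* Elements of the graded pieces of the Koszul complex  /\ F (x) S/J :
   functions from subsets u of [m] to the coefficient of e_u, a polynomial
   taken in normal form modulo J (support disjoint from J). *)
Definition kelt := {set 'I_m} -> {mpoly K[n]}.

Definition redJ (p : {mpoly K[n]}) : {mpoly K[n]} :=
  \sum_(a <- msupp p | ~~ J a) p@_a *: 'X_[a].

Definition in_Kt (g : kelt) : Prop :=
  forall u : {set 'I_m}, (#|u| != t -> g u = 0) /\ redJ (g u) = g u.

(* g is a cycle: g in K_t and the Koszul differential
   d(e_u (x) a) = sum_j (-1)^(j-1) f_{u_j} e_{u \ u_j} (x) a  vanishes;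
   the coefficient of e_w in d g is computed below. *)
Definition kdiff (g : kelt) (w : {set 'I_m}) : {mpoly K[n]} :=
  redJ (\sum_(k : 'I_m | k \notin w)
          ((-1) ^+ #|[set i in w | (i < k)%N]| * 'X_[f k] * g (k |: w))).

Definition cycle_t (g : kelt) : Prop := in_Kt g /\ forall w : {set 'I_m}, kdiff g w = 0.

Definition is_init (g : kelt) (u : {set 'I_m}) (w : 'X_{1..n}) : Prop :=
  w \in msupp (g u) /\
  forall (u' : {set 'I_m}) (v' : 'X_{1..n}), v' \in msupp (g u') -> (u' != u) || (v' != w) ->
    termgt u w u' v'.

Definition eterm (u : {set 'I_m}) (v : 'X_{1..n}) : kelt :=
  fun u' => if u' == u then redJ 'X_[v] else 0.

Definition kadd (g h : kelt) : kelt := fun u => g u + h u.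
Definition kscale (s : {mpoly K[n]}) (g : kelt) : kelt := fun u => redJ (s * g u).

Definition submodule (P : kelt -> Prop) : Prop :=
  P (fun _ : {set 'I_m} => 0) /\ (forall g h, P g -> P h -> P (kadd g h)) /\
  (forall s g, P g -> P (kscale s g)).

Definition gen_submod (G : kelt -> Prop) (h : kelt) : Prop :=
  forall P : kelt -> Prop, submodule P -> (forall g, G g -> P g) -> P h.

Definition in_Zt (h : kelt) : Prop :=
  gen_submod (fun e => exists g u w, cycle_t g /\ is_init g u w /\ e = eterm u w) h.

Definition L_ideal (u : {set 'I_m}) (v : 'X_{1..n}) : Prop :=
  exists w : 'X_{1..n}, lem w v /\ (J w \/ in_Zt (eterm u w)).

End Koszul.

From Pilot Require Import Defs.
From mathcomp Require Import all_boot all_order all_algebra.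
From mathcomp Require Import mpoly.
From mathcomp Require Import ring.

(* For i < j, the derivation x_i d/dx_j of S extends to the Koszul complex by
   e_k |-> (f_k)_j e_(tau k), where f_(tau k) = f_k x_i / x_j is again one of
   the generators because I is Borel-fixed and generated in a single degree.
   This extension commutes with the Koszul differential and, J being
   Borel-fixed, preserves J; so it maps cycles to cycles.  If e_u (x) z x_j is
   the initial term of a cycle g, the image of g has initial term a nonzero
   multiple (characteristic 0) of e_u (x) z x_i: on coefficients the derivation
   raises monomials in revlex order, while on basis elements it only produces
   e_u from larger ones, which do not occur in g.  Hence z x_j in L_u forces
   z x_i in L_u. *)

Set Implicit Arguments. Unset Strict Implicit. Unset Printing Implicit Defensive.
Import GRing.Theory.
Local Open Scope ring_scope.

Section Monomials.
Variable n : nat.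
Implicit Types a b c w : 'X_{1..n}.

Lemma subm1K a (x : 'I_n) : a x != 0%N -> (a - U_(x) + U_(x))%MM = a.
Proof. by move=> ax; rewrite submK // lep1mP. Qed.

Lemma eq_lem_mdeg a b : lem a b -> mdeg a = mdeg b -> a = b.
Proof.
move=> ab; rewrite -(submK ab) mdegD -{1}[mdeg a]add0n => /addIn/esym/eqP.
by rewrite mdeg_eq0 => /eqP->; rewrite add0m.
Qed.

Lemma lem_add2r a b c : lem (a + c)%MM (b + c)%MM = lem a b.
Proof.
by apply/mnm_lepP/mnm_lepP => ab x; move: (ab x); rewrite ?mnmDE ?leq_add2r.
Qed.

Lemma lem_drop1 w a (y : 'I_n) : w y = 0%N -> lem w (a + U_(y))%MM -> lem w a.
Proof.
move=> wy /mnm_lepP wa; apply/mnm_lepP => x; move: (wa x); rewrite mnmDE mnm1E.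
by case: eqP => [<-|_]; rewrite ?wy ?addn0.
Qed.

End Monomials.

Section RevLex.
Variable k : nat.
Implicit Types a b c : 'X_{1..k}.

Lemma revgtxx a : revgt a a = false.
Proof.
by rewrite /revgt ltnn eqxx /=; apply/existsP => -[x /andP[]]; rewrite ltnn.
Qed.

Lemma revgt_trans a b c : revgt a b -> revgt b c -> revgt a c.
Proof.
rewrite /revgt => /orP[ltab|/andP[/eqP eab /existsP[x /andP[ltx /forallP eqx]]]]
                  /orP[ltbc|/andP[/eqP ebc /existsP[y /andP[lty /forallP eqy]]]].
- by rewrite (ltn_trans ltbc ltab).
- by rewrite -ebc ltab.
- by rewrite eab ltbc.
rewrite eab ebc ltnn eqxx /=; apply/existsP.
have eq_above (z : 'I_k) : (maxn x y < z)%N -> a z == c z.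
  by rewrite gtn_max => /andP[xz yz]; move: (eqx z) (eqy z); rewrite xz yz /= => /eqP-> .
case: (ltngtP x y) => [xy|yx|/val_inj exy].
- exists y; have /eqP-> := implyP (eqx y) xy; rewrite lty /=.
  by apply/forallP => z; apply/implyP => yz; apply: eq_above; rewrite (maxn_idPr (ltnW xy)).
- exists x; have /eqP<- := implyP (eqy x) yx; rewrite ltx /=.
  by apply/forallP => z; apply/implyP => xz; apply: eq_above; rewrite (maxn_idPl (ltnW yx)).
- subst y; exists x; rewrite (ltn_trans ltx lty) /=.
  by apply/forallP => z; apply/implyP => xz; apply: eq_above; rewrite maxnn.
Qed.

Lemma revgt_add2r a b c : revgt (a + c)%MM (b + c)%MM = revgt a b.
Proof.
rewrite /revgt !mdegD ltn_add2r eqn_add2r; congr (_ || (_ && _)).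
apply: eq_existsb => x; rewrite !mnmDE ltn_add2r; congr (_ && _).
by apply: eq_forallb => z; rewrite !mnmDE eqn_add2r.
Qed.

Lemma revgt_mnm1 (x y : 'I_k) : (x < y)%N -> revgt U_(x)%MM U_(y)%MM.
Proof.
have neq (p q : 'I_k) : (p < q)%N -> (p == q) = false by rewrite -val_eqE => /ltn_eqF.
move=> xy; rewrite /revgt !mdeg1 ltnn eqxx /=; apply/existsP; exists y.
rewrite !mnm1E eqxx neq //=; apply/forallP => z; apply/implyP => yz.
by rewrite !mnm1E !neq // (ltn_trans xy yz).
Qed.

End RevLex.

Section ExteriorOrder.
Variables (n m : nat) (f : 'I_m -> 'X_{1..n}).
Implicit Types u : {set 'I_m}.

Lemma egtxx u : egt f u u = false.
Proof. by rewrite /egt !revgtxx andbF. Qed.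

Lemma egt_trans u1 u2 u3 : egt f u1 u2 -> egt f u2 u3 -> egt f u1 u3.
Proof.
rewrite /egt => /orP[lt12|/andP[/eqP e12 lt12]] /orP[lt23|/andP[/eqP e23 lt23]].
- by rewrite (revgt_trans lt23 lt12).
- by rewrite -e23 lt12.
- by rewrite e12 lt23.
- by rewrite e12 e23 eqxx (revgt_trans lt12 lt23) orbT.
Qed.

Lemma egt_asym u1 u2 : egt f u1 u2 -> egt f u2 u1 -> False.
Proof. by move=> lt12 lt21; have := egt_trans lt12 lt21; rewrite egtxx. Qed.

(* Exchanging a generator [a x_i] of [e_u] for [a x_j], j > i, lowers the
   product in revlex order, so it raises the basis element. *)
Lemma egt_exchange u (k l : 'I_m) (a : 'X_{1..n}) (i j : 'I_n) :
  (i < j)%N -> f k = (a + U_(j))%MM -> f l = (a + U_(i))%MM ->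
  l \in u -> k \notin u :\ l -> egt f (k |: u :\ l) u.
Proof.
move=> ij fk fl lu ku; apply/orP; left.
rewrite /Defs.fprod (big_setD1 l lu) big_setU1 //= fk fl.
by rewrite revgt_add2r ![(a + _)%MM]addmC revgt_add2r revgt_mnm1.
Qed.

End ExteriorOrder.

Section NormalForm.
Variables (K : fieldType) (n : nat) (J : pred 'X_{1..n}).
Implicit Types p q : {mpoly K[n]}.

Lemma mcoeff_redJ p a : (redJ J p)@_a = if J a then 0 else p@_a.
Proof.
rewrite /redJ raddf_sum /= -big_filter.
under eq_bigr => b _ do rewrite mcoeffZ mcoeffX.
have [a_nf|a_nnf] := boolP (a \in [seq b <- msupp p | ~~ J b]).
- rewrite (bigD1_seq a a_nf (filter_uniq _ (msupp_uniq p))) /= eqxx mulr1.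
  rewrite big1 ?addr0; last by move=> b /negbTE->; rewrite mulr0.
  by move: a_nf; rewrite mem_filter => /andP[/negbTE-> _].
rewrite big1_seq => [|b /andP[_ b_nf]]; last first.
  by case: eqP => [eab|]; [move: a_nnf; rewrite -eab b_nf | rewrite mulr0].
move: a_nnf; rewrite mem_filter negb_and negbK; case: (J a) => //= a_nsupp.
exact/esym/memN_msupp_eq0.
Qed.

Definition in_ideal p := forall a, ~~ J a -> p@_a = 0.

Lemma redJ_eq0 p : redJ J p = 0 <-> in_ideal p.
Proof.
split=> [p0 a Ja|pJ]; first by have := mcoeff_redJ p a; rewrite p0 mcoeff0 (negbTE Ja).
by apply/mpolyP => a; rewrite mcoeff_redJ mcoeff0; case: ifP => // /negbT/pJ.
Qed.

Lemma redJ0 : redJ J 0 = 0 :> {mpoly K[n]}.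
Proof. by apply/redJ_eq0 => a _; rewrite mcoeff0. Qed.

Lemma redJ_idem p : redJ J (redJ J p) = redJ J p.
Proof. by apply/mpolyP => a; rewrite !mcoeff_redJ; case: (J a). Qed.

Lemma msupp_redJ p v : v \in msupp (redJ J p) -> v \in msupp p /\ ~~ J v.
Proof. by rewrite !mcoeff_msupp mcoeff_redJ; case: (J v); rewrite ?eqxx. Qed.

Lemma in_ideal_redJB p : in_ideal (redJ J p - p).
Proof. by move=> a Ja; rewrite mcoeffB mcoeff_redJ (negbTE Ja) subrr. Qed.

Lemma in_ideal0 : in_ideal 0.
Proof. by move=> a _; rewrite mcoeff0. Qed.

Lemma in_idealD p q : in_ideal p -> in_ideal q -> in_ideal (p + q).
Proof. by move=> pJ qJ a Ja; rewrite mcoeffD pJ ?qJ ?addr0. Qed.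

Lemma in_ideal_sum (I : Type) (r : seq I) (P : pred I) (F : I -> {mpoly K[n]}) :
  (forall x, P x -> in_ideal (F x)) -> in_ideal (\sum_(x <- r | P x) F x).
Proof.
by move=> FJ; elim/big_rec: _ => [|x q Px qJ]; [exact: in_ideal0 | exact: in_idealD (FJ x Px) qJ].
Qed.

Lemma in_idealMl p q : monomial_ideal J -> in_ideal q -> in_ideal (p * q).
Proof.
move=> Jmon qJ a Ja; rewrite mcoeffM big1 // => -[b c] /= /eqP eabc.
rewrite qJ ?mulr0 //; apply: contra Ja => Jc.
by rewrite eabc addmC; apply: Jmon.
Qed.

End NormalForm.

(* An element of the exterior algebra on [e_1, ..., e_m] with coefficients in
   [R] is encoded by its coefficient function on index sets, as [kelt] does;
   [contract k] is the interior product with the dual of [e_k] and [wedge l]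
   is left multiplication by [e_l]. *)
Section Exterior.
Variables (R : comRingType) (m : nat).
Implicit Types (w : {set 'I_m}) (k l : 'I_m) (h : {set 'I_m} -> R).

Definition sgn w k : R := (-1) ^+ #|[set x in w | (x < k)%N]|.

Definition contract k h w := if k \in w then 0 else sgn w k * h (k |: w).

Definition wedge l h w := if l \in w then sgn (w :\ l) l * h (w :\ l) else 0.

Lemma sgn_sqr w k : sgn w k * sgn w k = 1.
Proof. by rewrite -expr2 sqrr_sign. Qed.

Lemma sgnU1 k l w : k \notin w -> sgn (k |: w) l = sgn w l * (-1) ^+ (k < l)%N.
Proof.
move=> kw; rewrite /sgn -exprD; congr (_ ^+ _).
have [kl|lk] := ltnP k l.
- have -> : [set x in k |: w | (x < l)%N] = k |: [set x in w | (x < l)%N].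
    by apply/setP => x; rewrite !inE; case: eqP => // ->; rewrite kl.
  by rewrite cardsU1 inE (negbTE kw) addnC.
- have -> : [set x in k |: w | (x < l)%N] = [set x in w | (x < l)%N].
    by apply/setP => x; rewrite !inE; case: eqP => //= ->; rewrite (negbTE kw) ltnNge lk.
  by rewrite addn0.
Qed.

Lemma sign_ltC k l : k != l -> (-1) ^+ (k < l)%N = - (-1) ^+ (l < k)%N :> R.
Proof.
by move=> /negbTE kl; case: ltngtP => [||/val_inj/eqP]; rewrite ?kl ?expr1 ?expr0 ?opprK.
Qed.

Lemma contract_wedge k l h w :
  contract k (wedge l h) w = (if k == l then h w else 0) - wedge l (contract k h) w.
Proof.
rewrite /contract /wedge; have [<-|kl] := eqVneq k l.
  rewrite setU11 setD11; have [kw|kw] := boolP (k \in w).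
    by rewrite mulrA sgn_sqr mul1r setD1K // subrr.
  by rewrite subr0 setU1K // mulrA sgn_sqr mul1r.
rewrite sub0r in_setU1 in_setD1 eq_sym (negbTE kl) /=.
have [kw|kw] := boolP (k \in w); first by case: (l \in w); rewrite ?mulr0 oppr0.
have [lw|lw] := boolP (l \in w); last by rewrite mulr0 oppr0.
have kwl : k \notin w :\ l by rewrite in_setD1 negb_and kw orbT.
have -> : (k |: w) :\ l = k |: (w :\ l).
  by apply/setP => x; rewrite !inE; case: (eqVneq x k) => [->|]; rewrite ?kl.
rewrite -{1}(setD1K lw) !sgnU1 ?setD11 // (sign_ltC kl).
set s := (-1) ^+ (l < k)%N; have ss : s * s = 1 by rewrite -expr2 sqrr_sign.
by rewrite -[RHS]mulr1 -ss; ring.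
Qed.

Lemma contractC k k' h w : contract k (contract k' h) w = - contract k' (contract k h) w.
Proof.
rewrite /contract; have [<-|kk'] := eqVneq k k'.
  by rewrite setU11; case: (k \in w); rewrite ?oppr0 // mulr0 oppr0.
rewrite !in_setU1 eq_sym (negbTE kk') /=.
have [kw|kw] := boolP (k \in w); have [k'w|k'w] := boolP (k' \in w);
  rewrite /= ?mulr0 ?oppr0 //.
by rewrite setUCA !sgnU1 // (sign_ltC kk'); ring.
Qed.

Lemma contractD k h1 h2 w :
  contract k (fun u => h1 u + h2 u) w = contract k h1 w + contract k h2 w.
Proof. by rewrite /contract; case: ifP; rewrite ?addr0 ?mulrDr. Qed.

Lemma contractB k h1 h2 w :
  contract k (fun u => h1 u - h2 u) w = contract k h1 w - contract k h2 w.
Proof. by rewrite /contract; case: ifP; rewrite ?subr0 ?mulrBr. Qed.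

Lemma contractMl k a h w : contract k (fun u => a * h u) w = a * contract k h w.
Proof. by rewrite /contract; case: ifP; rewrite ?mulr0 // mulrCA. Qed.

Lemma contract_sum k (I : Type) (r : seq I) (F : I -> {set 'I_m} -> R) w :
  contract k (fun u => \sum_(y <- r) F y u) w = \sum_(y <- r) contract k (F y) w.
Proof. by rewrite /contract; case: (k \in w); rewrite ?big1_eq ?mulr_sumr. Qed.

Lemma wedge_sum l (I : Type) (r : seq I) (F : I -> {set 'I_m} -> R) w :
  wedge l (fun u => \sum_(y <- r) F y u) w = \sum_(y <- r) wedge l (F y) w.
Proof. by rewrite /wedge; case: (l \in w); rewrite ?big1_eq ?mulr_sumr. Qed.

Lemma wedge_contractE l k h w : wedge l (contract k h) w =
  if (l \in w) && (k \notin w :\ l) then sgn (w :\ l) l * (sgn (w :\ l) k * h (k |: w :\ l))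
  else 0.
Proof. by rewrite /wedge /contract; case: (l \in w); case: (k \in w :\ l); rewrite ?mulr0. Qed.

End Exterior.

Lemma card_exchange (T : finType) (A : {set T}) x y :
  y \in A -> x \notin A :\ y -> #|x |: A :\ y| = #|A|.
Proof. by move=> yA xA; rewrite cardsU1 xA (cardsD1 y A) yA. Qed.

Section Derivation.
Variables (K : fieldType) (n : nat) (i j : 'I_n).
Implicit Types (p q : {mpoly K[n]}) (a b : 'X_{1..n}).

Definition der p := 'X_[U_(i)] * mderiv j p.

Lemma der0 : der 0 = 0.
Proof. by rewrite /der raddf0 mulr0. Qed.

Lemma der_sum (I : Type) (r : seq I) (P : pred I) (F : I -> {mpoly K[n]}) :
  der (\sum_(x <- r | P x) F x) = \sum_(x <- r | P x) der (F x).
Proof. by rewrite /der raddf_sum mulr_sumr. Qed.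

Lemma derM p q : der (p * q) = der p * q + p * der q.
Proof. by rewrite /der mderivM; ring. Qed.

Lemma der_signMl e p : der ((-1) ^+ e * p) = (-1) ^+ e * der p.
Proof. by rewrite -signr_odd !mulr_sign; case: (odd e); rewrite /der ?raddfN ?mulrN. Qed.

Lemma derX a : der 'X_[a] = 'X_[a - U_(j) + U_(i)] *+ a j.
Proof. by rewrite /der mderivX -scalerAr -mpolyXD scaler_nat addmC. Qed.

Lemma mcoeff_der p b : (der p)@_(b + U_(i)) = p@_(b + U_(j)) *+ (b j).+1.
Proof. by rewrite /der mulrC addmC mcoeffMX mcoeff_mderiv. Qed.

Lemma mcoeff_der_eq0 p a : a i = 0%N -> (der p)@_a = 0.
Proof.
move=> ai; apply/memN_msupp_eq0; rewrite /der mulrC (perm_mem (msuppMX _ _)).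
by apply/mapP => -[b _ eab]; move: ai; rewrite eab mnmDE mnm1E eqxx.
Qed.

Lemma msupp_der p v : v \in msupp (der p) ->
  exists2 a, a \in msupp p & (v + U_(j) = a + U_(i))%MM.
Proof.
move=> vp; have [vi0|vi] := eqVneq (v i) 0%N.
  by move: vp; rewrite mcoeff_msupp mcoeff_der_eq0 ?eqxx.
move: vp; rewrite -(subm1K vi) mcoeff_msupp mcoeff_der => vp.
exists (v - U_(i) + U_(j))%MM; last by rewrite -!addmA [(U_(i) + _)%MM]addmC.
by rewrite mcoeff_msupp; apply: contraNneq vp => ->; rewrite mul0rn.
Qed.

Lemma der_in_ideal (J : pred 'X_{1..n}) p : (i < j)%N ->
  borel_fixed (fun a => J a) -> in_ideal J p -> in_ideal J (der p).
Proof.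
move=> ij [_ JB] pJ a Ja; have [ai0|ai] := eqVneq (a i) 0%N; first exact: mcoeff_der_eq0.
move: Ja; rewrite -(subm1K ai) mcoeff_der => Ja; rewrite pJ ?mul0rn //.
by apply: contra Ja; apply: JB.
Qed.

End Derivation.

Section KoszulDerivation.
Variables (K : fieldType) (n m : nat) (f : 'I_m -> 'X_{1..n}) (i j : 'I_n).
Variable tau : 'I_m -> 'I_m.
Local Notation kelt := (kelt K n m).
Local Notation der := (@der K n i j).
Hypothesis der_f : forall k, der 'X_[f k] = (f k j)%:R * 'X_[f (tau k)].
Implicit Types (g : kelt) (w : {set 'I_m}).

Definition kd g w := \sum_k 'X_[f k] * contract k g w.

Definition der_ext g w := \sum_k (f k j)%:R * wedge (tau k) (contract k g) w.

Definition kder g w := der (g w) + der_ext g w.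

Lemma kdD g1 g2 w : kd (fun u => g1 u + g2 u) w = kd g1 w + kd g2 w.
Proof. by rewrite /kd -big_split; apply: eq_bigr => k _; rewrite contractD mulrDr. Qed.

Lemma kdB g1 g2 w : kd (fun u => g1 u - g2 u) w = kd g1 w - kd g2 w.
Proof. by rewrite /kd -sumrB; apply: eq_bigr => k _; rewrite contractB mulrBr. Qed.

Lemma kd_der g w :
  kd (fun u => der (g u)) w = der (kd g w) - \sum_k (f k j)%:R * 'X_[f (tau k)] * contract k g w.
Proof.
rewrite /kd der_sum -sumrB; apply: eq_bigr => k _.
rewrite derM der_f addrC addKr /contract; case: (k \in w); first by rewrite der0.
by rewrite der_signMl.
Qed.

Lemma contract_der_ext k g w : contract k (der_ext g) w =
  \sum_k' (f k' j)%:R * ((if k == tau k' then contract k' g w else 0)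
                         - wedge (tau k') (contract k (contract k' g)) w).
Proof.
by rewrite contract_sum; apply: eq_bigr => k' _; rewrite contractMl contract_wedge.
Qed.

Lemma wedge_contract_kd l k' g w : wedge l (contract k' (kd g)) w =
  - \sum_k 'X_[f k] * wedge l (contract k (contract k' g)) w.
Proof.
have -> : wedge l (contract k' (kd g)) w =
          wedge l (fun u => \sum_k 'X_[f k] * - contract k (contract k' g) u) w.
  rewrite /wedge; case: (l \in w) => //; congr (_ * _).
  by rewrite contract_sum; apply: eq_bigr => k _; rewrite contractMl contractC.
rewrite wedge_sum -sumrN; apply: eq_bigr => k _.
by rewrite /wedge; case: (l \in w); rewrite ?mulr0 ?oppr0 // !mulrN mulrCA.
Qed.

Lemma kd_der_ext g w :
  kd (der_ext g) w = \sum_k (f k j)%:R * 'X_[f (tau k)] * contract k g w + der_ext (kd g) w.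
Proof.
rewrite /kd; under eq_bigr => k _ do rewrite contract_der_ext mulr_sumr.
rewrite exchange_big /der_ext -big_split /=; apply: eq_bigr => k' _.
under eq_bigr => k _ do rewrite mulrBr mulrBr.
rewrite sumrB (bigD1 (tau k')) //= eqxx big1 ?addr0 => [|k /negbTE->]; last by rewrite !mulr0.
rewrite wedge_contract_kd mulrN mulr_sumr; congr (_ - _); first by rewrite mulrCA mulrA.
by apply: eq_bigr => k _; rewrite mulrCA.
Qed.

Lemma kd_kder g w : kd (kder g) w = kder (kd g) w.
Proof. by rewrite /kder kdD kd_der kd_der_ext addrA subrK. Qed.

End KoszulDerivation.

Section KoszulModJ.
Variables (K : fieldType) (n m : nat) (f : 'I_m -> 'X_{1..n}) (J : pred 'X_{1..n}).
Local Notation kelt := (kelt K n m).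
Implicit Types (g h : kelt) (w : {set 'I_m}).

Lemma kdiff_kd h w : kdiff f J h w = redJ J (kd f h w).
Proof.
rewrite /kdiff /kd big_mkcond /=; congr (redJ J _); apply: eq_bigr => k _.
by rewrite /contract /sgn; case: (k \in w); rewrite /= ?mulr0 // mulrCA mulrA.
Qed.

Lemma cycle_t_in_ideal t g w : cycle_t f J t g -> in_ideal J (kd f g w).
Proof. by move=> [_ dg0]; apply/redJ_eq0; rewrite -kdiff_kd dg0. Qed.

Hypothesis J_mon : monomial_ideal J.

Lemma in_ideal_contract k h w :
  (forall u, in_ideal J (h u)) -> in_ideal J (contract k h w).
Proof. by move=> hJ; rewrite /contract; case: ifP => _; [exact: in_ideal0 | exact: in_idealMl]. Qed.

Lemma in_ideal_wedge l h w :
  (forall u, in_ideal J (h u)) -> in_ideal J (wedge l h w).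
Proof. by move=> hJ; rewrite /wedge; case: ifP => _; [exact: in_idealMl | exact: in_ideal0]. Qed.

Lemma in_ideal_kd g w : (forall u, in_ideal J (g u)) -> in_ideal J (kd f g w).
Proof.
by move=> gJ; apply: in_ideal_sum => k _; apply: in_idealMl => //; exact: in_ideal_contract.
Qed.

Lemma in_ideal_der_ext (j : 'I_n) (tau : 'I_m -> 'I_m) g w :
  (forall u, in_ideal J (g u)) -> in_ideal J (der_ext f j tau g w).
Proof.
move=> gJ; apply: in_ideal_sum => k _; apply: in_idealMl => //.
by apply: in_ideal_wedge => u; exact: in_ideal_contract.
Qed.

End KoszulModJ.

Lemma is_init_eq0 (K : fieldType) (n m : nat) (f : 'I_m -> 'X_{1..n}) (g : kelt K n m) u w u0 :
  is_init f g u w -> u0 != u -> ~~ egt f u u0 -> g u0 = 0.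
Proof.
move=> [_ gmax] u0u /negbTE ngt; apply/eqP; rewrite -msupp_eq0.
case E: (msupp (g u0)) => [//|v s]; have /gmax : v \in msupp (g u0) by rewrite E mem_head.
by rewrite u0u => /(_ isT); rewrite /termgt ngt eq_sym (negbTE u0u).
Qed.

Section InitialIdeal.
Variables (K : fieldType) (n m : nat) (f : 'I_m -> 'X_{1..n}) (J : pred 'X_{1..n}) (t : nat).
Local Notation kelt := (kelt K n m).

Definition init_divides u v := exists (g : kelt) w,
  cycle_t f J t g /\ is_init f g u w /\ lem w v.

Lemma in_Zt_init_divides (h : kelt) u v :
  in_Zt f J t h -> v \in msupp (h u) -> init_divides u v.
Proof.
move=> hZ; move: u v.
apply: (hZ (fun h => forall u v, v \in msupp (h u) -> init_divides u v)) => [|e].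
  split=> [u v|]; first by rewrite mcoeff_msupp mcoeff0 eqxx.
  split=> [g1 g2 g1P g2P u v /msuppD_le|s g1 g1P u v].
    by rewrite mem_cat => /orP[/g1P|/g2P].
  move=> /msupp_redJ[/msuppM_le/allpairsP[[v1 v2] /= [_ v2g ->]] _].
  have [g [w [gc [gi wv]]]] := g1P u v2 v2g.
  by exists g, w; do 2!split=> //; exact: lepm_trans wv (lem_addl _ _).
move=> [g [u0 [w0 [gc [gi ->]]]]] u v.
rewrite /eterm; case: eqP => [->|_]; last by rewrite mcoeff_msupp mcoeff0 eqxx.
case/msupp_redJ; rewrite msuppX mem_seq1 => /eqP-> _.
by exists g, w0; do 2!split=> //; exact: lepm_refl.
Qed.

Lemma L_idealE u v : L_ideal K f J t u v <->
  exists2 w, lem w v & J w \/ exists g : kelt, cycle_t f J t g /\ is_init f g u w.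
Proof.
split=> [[w [wv wJZ]]|[w wv wJi]].
  have [Jw|nJw] := boolP (J w); first by exists w; [|left].
  case: wJZ => [Jw|wZ]; first by rewrite Jw in nJw.
  have wu : w \in msupp (eterm K J u w u).
    by rewrite /eterm eqxx mcoeff_msupp mcoeff_redJ (negbTE nJw) mcoeffX eqxx oner_neq0.
  have [g [w1 [gc [gi w1w]]]] := in_Zt_init_divides wZ wu.
  by exists w1; [exact: lepm_trans w1w wv | right; exists g].
exists w; split=> //; case: wJi => [Jw|[g [gc gi]]]; first by left.
by right=> P _ PG; apply: PG; exists g, u, w.
Qed.

End InitialIdeal.

Section BorelMove.
Variables (K : fieldType) (n m : nat) (f : 'I_m -> 'X_{1..n}) (J : pred 'X_{1..n}) (t : nat).
Variables (i j : 'I_n) (tau : 'I_m -> 'I_m).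
Hypothesis char0 : [pchar K] =i pred0.
Hypothesis J_borel : borel_fixed (fun a => J a).
Hypothesis ij : (i < j)%N.
Hypothesis f_tau : forall k, (0 < f k j)%N -> f (tau k) = (f k - U_(j) + U_(i))%MM.
Local Notation kelt := (kelt K n m).
Implicit Types (g : kelt) (u w : {set 'I_m}).

Lemma der_f_tau k : @der K n i j 'X_[f k] = (f k j)%:R * 'X_[f (tau k)].
Proof.
rewrite derX mulr_natl; have [->|fkj] := posnP (f k j); first by rewrite !mulr0n.
by rewrite f_tau.
Qed.

Definition kderJ g u := redJ J (kder f i j tau g u).

Lemma der_ext_eq0 g u : (forall u0, egt f u0 u -> g u0 = 0) -> der_ext f j tau g u = 0.
Proof.
move=> g_above; apply: big1 => k _; have [->|fkj] := posnP (f k j); first by rewrite mul0r.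
rewrite wedge_contractE; case: ifP => [/andP[tku ku]|_]; last by rewrite mulr0.
rewrite g_above ?mulr0 //; apply: (egt_exchange ij _ (f_tau fkj)) => //.
by rewrite subm1K // lt0n_neq0.
Qed.

Lemma kderJ_Kt g : in_Kt J t g -> in_Kt J t (kderJ g).
Proof.
move=> gK u; split; last by rewrite /kderJ redJ_idem.
move=> ut; rewrite /kderJ /kder (proj1 (gK u) ut) der0 add0r /der_ext big1 ?redJ0 // => k _.
rewrite wedge_contractE; case: ifP => [/andP[tku ku]|_]; last by rewrite mulr0.
by rewrite (proj1 (gK _)) ?card_exchange // !mulr0.
Qed.

Lemma cycle_kderJ g : cycle_t f J t g -> cycle_t f J t (kderJ g).
Proof.
move=> gc; split=> [|w]; first exact: kderJ_Kt (proj1 gc).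
have J_mon : monomial_ideal J := proj1 J_borel.
rewrite kdiff_kd; apply/redJ_eq0.
rewrite -(subrK (kd f (kder f i j tau g) w) (kd f (kderJ g) w)) -kdB.
apply: in_idealD; first by apply: in_ideal_kd => // u; exact: in_ideal_redJB.
rewrite (kd_kder der_f_tau); apply: in_idealD.
  by apply: der_in_ideal => //; exact: (cycle_t_in_ideal _ gc).
by apply: (in_ideal_der_ext _ J_mon) => u; exact: (cycle_t_in_ideal _ gc).
Qed.

Lemma is_init_kderJ g u z :
  is_init f g u (z + U_(j))%MM -> ~~ J (z + U_(i))%MM ->
  is_init f (kderJ g) u (z + U_(i))%MM.
Proof.
move=> gi Jz; have [gz gmax] := gi.
have g_above u0 : egt f u0 u -> g u0 = 0.
  move=> gt; apply: (is_init_eq0 gi); first by apply: contraTneq gt => ->; rewrite egtxx.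
  by apply/negP => /(egt_asym gt).
have ext0 := der_ext_eq0 g_above.
split.
  rewrite mcoeff_msupp mcoeff_redJ (negbTE Jz) /kder ext0 addr0 mcoeff_der.
  rewrite -mulr_natr mulf_eq0 negb_or -mcoeff_msupp gz /=.
  by move/pcharf0P: char0 => ->.
move=> u' v'; have [->|u'u] := eqVneq u' u => /msupp_redJ[v'g _] ne.
  move: ne v'g; rewrite /= /kder ext0 addr0 => v'z /msupp_der[a ag ea].
  have swapU : (z + U_(i) + U_(j) = z + U_(j) + U_(i))%MM.
    by rewrite -!addmA [(U_(i) + _)%MM]addmC.
  have az : a != (z + U_(j))%MM.
    by apply: contraNneq v'z => eaz; apply/eqP/(@addIm _ U_(j)%MM); rewrite ea eaz swapU.
  have := gmax u a ag; rewrite az orbT /termgt egtxx eqxx /= => /(_ isT) za.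
  by rewrite -(revgt_add2r _ _ U_(j)%MM) ea swapU revgt_add2r.
rewrite /termgt eq_sym (negbTE u'u) orbF; apply: contraTT v'g => ngt.
rewrite /kder (is_init_eq0 gi u'u ngt) der0 add0r der_ext_eq0 ?msupp0 // => u0 gt.
apply: (is_init_eq0 gi); first by apply/eqP => e; move: ngt; rewrite -e gt.
by apply: contra ngt => gt'; exact: egt_trans gt' gt.
Qed.

Lemma L_ideal_borel_move u a :
  L_ideal K f J t u (a + U_(j))%MM -> L_ideal K f J t u (a + U_(i))%MM.
Proof.
rewrite !L_idealE => -[w wa wJi].
have [wj0|wj] := posnP (w j).
  by exists w => //; exact: lepm_trans (lem_drop1 wj0 wa) (lem_addr _ _).
have ew := subm1K (lt0n_neq0 wj); set z := (w - U_(j))%MM in ew.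
exists (z + U_(i))%MM; first by move: wa; rewrite -ew !lem_add2r.
have [Jz|nJz] := boolP (J (z + U_(i))%MM); first by left.
case: wJi => [Jw|[g [gc gi]]].
  by move: nJz; rewrite (proj2 J_borel _ _ _ ij) // ew.
right; exists (kderJ g); split; first exact: cycle_kderJ.
by apply: is_init_kderJ; rewrite ?ew.
Qed.

End BorelMove.

Lemma borel_gens_move n m (I : pred 'X_{1..n}) (f : 'I_m -> 'X_{1..n}) (i j : 'I_n) :
  borel_fixed (fun a => I a) -> (forall a, I a <-> exists k, lem (f k) a) ->
  (forall k l, mdeg (f k) = mdeg (f l)) -> (i < j)%N ->
  exists tau : 'I_m -> 'I_m,
    forall k, (0 < f k j)%N -> f (tau k) = (f k - U_(j) + U_(i))%MM.
Proof.
move=> I_borel I_gens f_deg ij.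
have f_move k : (0 < f k j)%N -> exists l, f l = (f k - U_(j) + U_(i))%MM.
  move=> fkj; have /I_gens[l fl] : I (f k - U_(j) + U_(i))%MM.
    apply: (proj2 I_borel _ _ _ ij); rewrite subm1K ?lt0n_neq0 //.
    by apply/I_gens; exists k; exact: lepm_refl.
  exists l; apply: eq_lem_mdeg fl _.
  by rewrite (f_deg l k) -{1}(subm1K (lt0n_neq0 fkj)) !mdegD !mdeg1.
exists (fun k => odflt k [pick l | f l == (f k - U_(j) + U_(i))%MM]) => k fkj.
case: pickP => [l /eqP //|none]; have [l fl] := f_move k fkj.
by move: (none l); rewrite fl eqxx.
Qed.

Theorem lemma4p2 (K : fieldType) (n m : nat)
  (I J : pred 'X_{1..n}) (f : 'I_m -> 'X_{1..n}) (t : nat) :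
  [pchar K] =i pred0 ->
  borel_fixed (fun a => I a) -> borel_fixed (fun a => J a) ->
  (* f_1, ..., f_m are the minimal monomial generators of I *)
  (forall a, I a <-> exists i, lem (f i) a) ->
  (forall i j, lem (f i) (f j) -> i = j) ->
  (* all of the same degree *)
  (forall i j, mdeg (f i) = mdeg (f j)) ->
  forall u : {set 'I_m}, #|u| = t ->
    borel_fixed (L_ideal K f J t u).
Proof.
move=> char0 I_borel J_borel I_gens _ f_deg u _; split.
  by move=> a b [w [wa wJZ]]; exists w; split=> //; exact: lepm_trans wa (lem_addr _ _).
move=> a i j ij; have [tau f_tau] := borel_gens_move I_borel I_gens f_deg ij.
exact: (L_ideal_borel_move (t := t) char0 J_borel ij f_tau).
Qed.
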